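(* For every fixed $\mathcal R>0$, the diversity order $$d=-\lim_{\gamma_T\to\infty}\frac{\log P_{out}^{IR}(M)}{\log\gamma_T}$$ exists and equals $M$; equivalently $P_{out}^{IR}(M)=c(\gamma_T)\gamma_T^{-M}$ with $\lim_{\gamma_T\to\infty}\log c(\gamma_T)/\log\gamma_T=0$.
   Context: Fix $M\ge 1$, $\sigma_1,\dots,\sigma_M>0$ and real $\lambda_1,\dots,\lambda_M$ with $|\lambda_k|<1$ (so that the pairwise power correlation coefficients $\rho_{k,l}=\lambda_k^2\lambda_l^2$ are $<1$). Let ${}_0F_1(;1;z)=\sum_{n\ge0} z^n/(n!)^2$. The random vector $(|h_1|,\dots,|h_M|)$ has joint PDF on $[0,\infty)^M$ $$f(x_1,\dots,x_M)=\prod_{k=1}^M\frac{1}{\sigma_k^2(1-\lambda_k^2)}\int_0^\infty e^{-\left(1+\sum_{k=1}^M\frac{\lambda_k^2}{1-\lambda_k^2}\right)t}\prod_{k=1}^M x_k\,e^{-\frac{x_k^2}{2\sigma_k^2(1-\lambda_k^2)}}\,{}_0F_1\!\left(;1;\frac{x_k^2\lambda_k^2 t}{2\sigma_k^2(1-\lambda_k^2)^2}\right)dt .$$ For a transmit SNR $\gamma_T>0$ set $\gamma_l=\gamma_T|h_l|^2$ and define the outage probability $P_{out}^{IR}(M)=\Pr\big(\sum_{l=1}^M\log_2(1+\gamma_l)<\mathcal R\big)$ (a function of $\gamma_T$). *)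

From HB Require Import structures.
From mathcomp Require Import all_boot all_order all_algebra.
From mathcomp Require Import all_classical all_reals all_analysis.
Set Implicit Arguments. Unset Strict Implicit. Unset Printing Implicit Defensive.
Import Order.TTheory GRing.Theory Num.Theory.
Import numFieldNormedType.Exports.
Local Open Scope classical_set_scope.
Local Open Scope ring_scope.

Section Defs.
Variable R : realType.

Definition hyp0F1 (z : R) : R :=
  limn (fun N : nat => \sum_(0 <= n < N) (z ^+ n / ((n`!)%:R ^+ 2))).

Definition vcons n (x : R) (y : 'I_n -> R) : 'I_n.+1 -> R :=
  fun i => match unlift ord0 i with None => x | Some j => y j end.

Fixpoint iint_pos (n : nat) : (('I_n -> R) -> \bar R) -> \bar R :=
  match n with
  | 0 => fun F => F (fun i => 0)
  | n'.+1 => fun F =>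
      (\int[@lebesgue_measure R]_(x in `[0%R, +oo[%classic)
          iint_pos (fun y => F (vcons x y)))%E
  end.

(* joint PDF of (|h_1|,...,|h_M|) *)
Definition jpdf (M : nat) (sigma lambda : 'I_M -> R) (x : 'I_M -> R) : \bar R :=
  ((\prod_(k < M) (sigma k ^+ 2 * (1 - lambda k ^+ 2))^-1)%:E *
   \int[@lebesgue_measure R]_(t in `[0%R, +oo[%classic)
     (expR (- ((1 + \sum_(k < M) lambda k ^+ 2 / (1 - lambda k ^+ 2)) * t)) *
      \prod_(k < M)
        (x k * expR (- (x k ^+ 2 / (2 * sigma k ^+ 2 * (1 - lambda k ^+ 2)))) *
         hyp0F1 (x k ^+ 2 * lambda k ^+ 2 * t /
                 (2 * sigma k ^+ 2 * (1 - lambda k ^+ 2) ^+ 2))))%:E)%E.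

Definition log2 (y : R) : R := ln y / ln 2.

(* P_out^IR(M) = Pr( sum_l log2(1 + gammaT |h_l|^2) < Rate ) *)
Definition Pout (M : nat) (sigma lambda : 'I_M -> R) (Rate gammaT : R) : \bar R :=
  iint_pos (fun x : 'I_M -> R =>
    if \sum_(l < M) log2 (1 + gammaT * x l ^+ 2) < Rate
    then jpdf sigma lambda x else 0%E).

End Defs.

From HB Require Import structures.
From mathcomp Require Import all_boot all_order all_algebra.
From mathcomp Require Import all_classical all_reals all_analysis.
From mathcomp Require Import ring lra.
Set Implicit Arguments. Unset Strict Implicit. Unset Printing Implicit Defensive.
Import Order.TTheory GRing.Theory Num.Theory.
Import numFieldNormedType.Exports.
Local Open Scope classical_set_scope.
Local Open Scope ring_scope.

(* Near the origin the joint density is comparable to [\prod_k x_k]: since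
   [1 <= 0F1 <= exp], once every [x_k ^ 2] is below [2 sigma_k^2 (1 - lambda_k^2)]
   the [t]-integrand is squeezed between a constant times [\prod_k x_k] on [0, 1]
   and [(\prod_k x_k) e^(-t)].  The outage event contains the cube where every
   [x_l ^ 2 <= Rate ln 2 / (2 M gammaT)], and is contained in the cube where every
   [x_l ^ 2 <= (2 ^ Rate - 1) / gammaT].  Integrating [\prod_k x_k] over these
   cubes gives [c1 gammaT^-M <= P_out <= c2 gammaT^-M] for large [gammaT], hence
   [ln P_out / ln gammaT --> -M]. *)

Section ge0_integral.
Context d (T : measurableType d) (R : realType) (mu : {measure set T -> \bar R}).

(* No measurability is needed: the integral of a nonnegative function is a
   supremum over its simple minorants. *)
Lemma le_ge0_integral (D : set T) (f g : T -> \bar R) :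
  (forall x, D x -> (0 <= f x)%E) -> (forall x, D x -> (f x <= g x)%E) ->
  (\int[mu]_(x in D) f x <= \int[mu]_(x in D) g x)%E.
Proof.
move=> f0 fg.
have g0 x : D x -> (0 <= g x)%E by move=> Dx; exact: le_trans (f0 _ Dx) (fg _ Dx).
rewrite (ge0_integralE mu f0) (ge0_integralE mu g0).
apply: ereal_sup_le => _ [h hf <-]; exists h => //= x.
apply: le_trans (hf x) _; rewrite /patch; case: ifP => // /set_mem Dx; exact: fg.
Qed.

End ge0_integral.

Section iterated_integral.
Variable R : realType.
Local Notation mu := (@lebesgue_measure R).

Lemma in_itv_ge0 (x : R) : (`[0%R, +oo[%classic : set R) x -> 0 <= x.
Proof. by rewrite /= in_itv /= andbT. Qed.

Lemma vcons0 n (x : R) (y : 'I_n -> R) : vcons x y ord0 = x.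
Proof. by rewrite /vcons unlift_none. Qed.

Lemma vconsS n (x : R) (y : 'I_n -> R) i : vcons x y (lift ord0 i) = y i.
Proof. by rewrite /vcons liftK. Qed.

Lemma vcons_ge0 n (x : R) (y : 'I_n -> R) : 0 <= x -> (forall i, 0 <= y i) ->
  forall i, 0 <= vcons x y i.
Proof. by move=> x0 y0 i; rewrite /vcons; case: unlift. Qed.

Lemma iint_pos_ge0 n (F : ('I_n -> R) -> \bar R) :
  (forall x, (forall i, 0 <= x i) -> (0 <= F x)%E) -> (0 <= iint_pos F)%E.
Proof.
elim: n F => [|n IH] F F0 /=; first exact: F0.
apply: integral_ge0 => x /in_itv_ge0 x0; apply: IH => y y0.
exact/F0/vcons_ge0.
Qed.

Lemma iint_pos_le n (F G : ('I_n -> R) -> \bar R) :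
  (forall x, (forall i, 0 <= x i) -> (0 <= F x)%E) ->
  (forall x, (forall i, 0 <= x i) -> (F x <= G x)%E) ->
  (iint_pos F <= iint_pos G)%E.
Proof.
elim: n F G => [|n IH] F G F0 FG /=; first exact: FG.
apply: le_ge0_integral => x /in_itv_ge0 x0.
  by apply: iint_pos_ge0 => y y0; apply/F0/vcons_ge0.
by apply: IH => y y0; [apply: F0|apply: FG]; apply: vcons_ge0.
Qed.

Lemma iint_pos_prodE n (f : R -> R) (c k : R) :
  measurable_fun (`[0%R, +oo[%classic : set R) f -> (forall x, 0 <= x -> 0 <= f x) ->
  (\int[mu]_(x in `[0%R, +oo[%classic) (f x)%:E = c%:E)%E -> 0 <= k ->
  iint_pos (fun y : 'I_n -> R => (k * \prod_(i < n) f (y i))%:E) = (k * c ^+ n)%:E.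
Proof.
move=> mf f0 intf; have c0 : 0 <= c.
  by rewrite -lee_fin -intf; apply: integral_ge0 => x /in_itv_ge0 x0; rewrite lee_fin f0.
elim: n k => [|n IH] k k0 /=; first by rewrite big_ord0 expr0.
transitivity (\int[mu]_(x in `[0%R, +oo[%classic)
                ((k * c ^+ n)%:E * (f x)%:E))%E.
  apply: eq_integral => x /[!inE] /in_itv_ge0 x0.
  rewrite -EFinM -mulrA [X in (k * X)%R]mulrC mulrA -IH ?mulr_ge0 ?f0 //.
  congr iint_pos; apply: funext => y; rewrite big_ord_recl vcons0 mulrA.
  by congr (_ * _)%:E; apply: eq_bigr => i _; rewrite vconsS.
rewrite ge0_integralZl_EFin ?intf -?EFinM ?exprSr ?mulrA ?mulr_ge0 ?exprn_ge0 //.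
- by move=> x /in_itv_ge0 x0; rewrite lee_fin f0.
- exact/measurable_realfun.measurable_EFinP.
Qed.

Lemma integral_indic_itv (beta u v : R) : 0 <= beta -> 0 <= u <= v ->
  (\int[mu]_(x in `[0%R, +oo[%classic) (beta * \1_(`[u, v]%classic) x)%:E
    = (beta * (v - u))%:E)%E.
Proof.
move=> b0 /andP[u0 uv].
under eq_integral do rewrite EFinM.
rewrite ge0_integralZl_EFin //; last first.
  exact/measurable_realfun.measurable_EFinP/measurable_realfun.measurable_indic.
rewrite integral_indic // (_ : _ `&` _ = `[u, v]%classic); last first.
  apply/seteqP; split=> x /=; first by case.
  by move=> uxv; split => //; move: uxv; rewrite !in_itv /= => /andP[/(le_trans u0) ->].
transitivity (beta%:E * (if (u%:E < v%:E)%E then (v - u)%:E else 0%E))%E.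
  by congr (_ * _)%E; exact: lebesgue_measure_itv.
rewrite lte_fin; case: ltP => [_|vu]; first by rewrite -EFinM.
have -> : v = u by apply/eqP; rewrite eq_le vu uv.
by rewrite subrr mulr0 mule0.
Qed.

Lemma iint_pos_cube n (beta u v k : R) : 0 <= beta -> 0 <= u <= v -> 0 <= k ->
  iint_pos (fun y : 'I_n -> R =>
     (k * \prod_(i < n) (beta * \1_(`[u, v]%classic : set R) (y i)))%:E)
  = (k * (beta * (v - u)) ^+ n)%:E.
Proof.
move=> b0 uv k0.
apply: (@iint_pos_prodE n (fun x => beta * \1_(`[u, v]%classic : set R) x)) => //.
- exact: (measurable_realfun.measurable_funM (f := cst beta)).
- by move=> x _; rewrite mulr_ge0 // indic_ge0.
- exact: integral_indic_itv.
Qed.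
End iterated_integral.

Section hypergeometric.
Variable R : realType.

Lemma hyp0F1_bounds (z : R) : 0 <= z -> 1 <= hyp0F1 z <= expR z.
Proof.
move=> z0.
pose s N := \sum_(0 <= n < N) (z ^+ n / ((n`!)%:R ^+ 2)) : R.
have term_ge0 n : 0 <= z ^+ n / ((n`!)%:R ^+ 2) :> R by rewrite divr_ge0 ?exprn_ge0.
have s_nd : nondecreasing_seq s.
  by move=> m n mn; apply: (nondecreasing_series (fun n _ _ => term_ge0 n)).
have s_le N : s N <= expR z.
  apply: (@le_trans _ _ (series (exp_coeff z) N)).
    apply: ler_sum => n _; rewrite /exp_coeff /=.
    have fact_ge1 : 1 <= (n`!)%:R :> R by rewrite ler1n fact_gt0.
    rewrite expr2 invfM mulrA ler_pdivrMr ?(lt_le_trans ltr01) //.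
    by rewrite ler_peMr // divr_ge0 ?exprn_ge0.
  apply: nondecreasing_cvgn_le; last exact: is_cvg_series_exp_coeff.
  move=> m n mn; apply: (nondecreasing_series (P := xpredT)) => // k _ _.
  by rewrite /exp_coeff /= divr_ge0 ?exprn_ge0.
have s_cvg : cvgn s.
  by apply: nondecreasing_is_cvgn => //; exists (expR z) => _ [N _ <-].
apply/andP; split.
  have -> : 1 = s 1%N by rewrite /s big_nat1 expr0 fact0 expr1n divr1.
  exact: nondecreasing_cvgn_le.
by apply: limr_le => //; near=> N; exact: s_le.
Unshelve. all: by end_near.
Qed.

End hypergeometric.

Section log_ratio.
Variable R : realType.

Lemma ln_cvgy : (@ln R) x @[x --> +oo] --> +oo.
Proof.
apply/cvgryPge => A; near=> x.
have x0 : 0 < x by near: x; exact: nbhs_pinfty_gt (num_real _).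
rewrite -(expRK A) ler_ln; [|by rewrite posrE expR_gt0|by rewrite posrE].
by near: x; exact: nbhs_pinfty_ge (num_real _).
Unshelve. all: by end_near.
Qed.

Lemma cvg_div_ln (f : R -> R) (A1 A2 m : R) :
  (\forall g \near +oo, A1 - m * ln g <= f g <= A2 - m * ln g) ->
  (fun g => f g / ln g) @ +oo --> - m.
Proof.
move=> fE.
have lnV_cvg0 : (fun g => (ln g)^-1) @ +oo --> (0 : R).
  apply/(@gtr0_cvgV0 _ _ _ _ (@ln R)); last exact: ln_cvgy.
  near=> g; apply: ln_gt0; near: g; exact: nbhs_pinfty_gt (num_real _).
have bound_cvg A : (fun g => A * (ln g)^-1 - m) @ +oo --> - m.
  rewrite -[X in _ --> X]add0r -(mulr0 A).
  exact: cvgB (cvgMl_tmp lnV_cvg0) (cvg_cst _).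
apply: (squeeze_cvgr _ (bound_cvg A1) (bound_cvg A2)); near=> g.
have lng_gt0 : 0 < ln g.
  by apply: ln_gt0; near: g; exact: nbhs_pinfty_gt (num_real _).
have boundE A : A * (ln g)^-1 - m = (A - m * ln g) / ln g.
  by field; rewrite gt_eqF.
rewrite !boundE !ler_pM2r ?invr_gt0 //.
by near: g; apply: filterS fE.
Unshelve. all: by end_near.
Qed.

Lemma ln_mul_divX (C u g : R) n : 0 < C -> 0 < u -> 0 < g ->
  ln (C * (u / g) ^+ n) = ln (C * u ^+ n) - n%:R * ln g.
Proof.
move=> C0 u0 g0; rewrite expr_div_n mulrA ln_div ?posrE ?mulr_gt0 ?exprn_gt0 //.
by rewrite lnXn // mulr_natl.
Qed.

Lemma ln2_gt0 : 0 < ln (2 : R).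
Proof. by rewrite ln_gt0 // ltr1n. Qed.

Lemma log2_1D_ge0 (u : R) : 0 <= u -> 0 <= log2 (1 + u).
Proof. by move=> u0; rewrite /log2 divr_ge0 ?ln_ge0 ?lerDl // ltW ?ln2_gt0. Qed.

End log_ratio.

Section joint_pdf.
Variable R : realType.
Local Notation mu := (@lebesgue_measure R).
Variables (M : nat) (sigma lambda : 'I_M -> R).
Hypothesis sigma_gt0 : forall k, 0 < sigma k.
Hypothesis lambda_lt1 : forall k, `|lambda k| < 1.

Lemma subr_sqr_lambda_gt0 k : 0 < 1 - lambda k ^+ 2.
Proof.
have := lambda_lt1 k; have := normr_ge0 (lambda k).
rewrite -real_normK ?num_real //; nra.
Qed.

Definition rayleigh_scale k := 2 * sigma k ^+ 2 * (1 - lambda k ^+ 2).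
Definition lambda_ratio k := lambda k ^+ 2 / (1 - lambda k ^+ 2).
Definition jpdf_prefactor := \prod_(k < M) (sigma k ^+ 2 * (1 - lambda k ^+ 2))^-1.
Definition jpdf_floor :=
  jpdf_prefactor * (expR (- (1 + \sum_(k < M) lambda_ratio k)) * expR (-1) ^+ M).

Lemma rayleigh_scale_gt0 k : 0 < rayleigh_scale k.
Proof. by rewrite !mulr_gt0 ?exprn_gt0 ?subr_sqr_lambda_gt0. Qed.

Lemma lambda_ratio_ge0 k : 0 <= lambda_ratio k.
Proof. by rewrite divr_ge0 ?sqr_ge0 ?ltW ?subr_sqr_lambda_gt0. Qed.

Lemma jpdf_prefactor_gt0 : 0 < jpdf_prefactor.
Proof.
by apply: prodr_gt0 => k _; rewrite invr_gt0 mulr_gt0 ?exprn_gt0 ?subr_sqr_lambda_gt0.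
Qed.

Lemma jpdf_floor_gt0 : 0 < jpdf_floor.
Proof. by rewrite !mulr_gt0 ?jpdf_prefactor_gt0 ?exprn_gt0 ?expR_gt0. Qed.

Let factor k (y t : R) :=
  y * expR (- (y ^+ 2 / rayleigh_scale k)) *
  hyp0F1 (y ^+ 2 * lambda k ^+ 2 * t / (2 * sigma k ^+ 2 * (1 - lambda k ^+ 2) ^+ 2)).

Lemma hyp0F1_argE k (y t : R) :
  y ^+ 2 * lambda k ^+ 2 * t / (2 * sigma k ^+ 2 * (1 - lambda k ^+ 2) ^+ 2)
  = y ^+ 2 / rayleigh_scale k * (lambda_ratio k * t).
Proof.
rewrite /rayleigh_scale /lambda_ratio; field.
by rewrite (gt_eqF (sigma_gt0 k)) (gt_eqF (subr_sqr_lambda_gt0 k)).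
Qed.

Lemma hyp0F1_arg_ge0 k (y t : R) : 0 <= t ->
  0 <= y ^+ 2 / rayleigh_scale k * (lambda_ratio k * t).
Proof.
move=> t0; apply: mulr_ge0; last by rewrite mulr_ge0 ?lambda_ratio_ge0.
by rewrite divr_ge0 ?sqr_ge0 ?ltW ?rayleigh_scale_gt0.
Qed.

Lemma factor_ge0 k (y t : R) : 0 <= y -> 0 <= t -> 0 <= factor k y t.
Proof.
move=> y0 t0; rewrite /factor hyp0F1_argE !mulr_ge0 ?expR_ge0 //.
by have /andP[/(le_trans ler01)] := hyp0F1_bounds (hyp0F1_arg_ge0 k y t0).
Qed.

Lemma factor_bounds k (y t : R) : 0 <= y -> y ^+ 2 <= rayleigh_scale k -> 0 <= t ->
  y * expR (-1) <= factor k y t <= y * expR (lambda_ratio k * t).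
Proof.
move=> y0 y_le t0; have s_gt0 := rayleigh_scale_gt0 k.
have q1 : y ^+ 2 / rayleigh_scale k <= 1 by rewrite ler_pdivrMr ?mul1r.
have /andP[F_ge1 F_le] := hyp0F1_bounds (hyp0F1_arg_ge0 k y t0).
rewrite /factor hyp0F1_argE -mulrA; apply/andP; split; apply: ler_wpM2l => //.
  rewrite -[X in X <= _]mulr1; apply: ler_pM => //.
  by rewrite ler_expR lerN2.
rewrite -[X in _ <= X]mul1r; apply: ler_pM; rewrite ?expR_ge0 //.
- exact: le_trans ler01 F_ge1.
- by rewrite expR_le1 oppr_le0 divr_ge0 ?sqr_ge0 ?ltW.
- apply: le_trans F_le _; rewrite ler_expR.
  by apply: ler_piMl => //; rewrite mulr_ge0 ?lambda_ratio_ge0.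
Qed.

Let integrand (x : 'I_M -> R) (t : R) :=
  expR (- ((1 + \sum_(k < M) lambda_ratio k) * t)) * \prod_(k < M) factor k (x k) t.

Lemma jpdfE x : jpdf sigma lambda x =
  (jpdf_prefactor%:E * \int[mu]_(t in `[0%R, +oo[%classic) (integrand x t)%:E)%E.
Proof. by []. Qed.

Section density_bounds.
Variable x : 'I_M -> R.
Hypothesis x_ge0 : forall k, 0 <= x k.

Lemma integrand_ge0 t : 0 <= t -> 0 <= integrand x t.
Proof.
by move=> t0; rewrite mulr_ge0 ?expR_ge0 // prodr_ge0 // => k _; apply: factor_ge0.
Qed.

Lemma jpdf_ge0 : (0 <= jpdf sigma lambda x)%E.
Proof.
rewrite jpdfE mule_ge0 //; first by rewrite lee_fin ltW ?jpdf_prefactor_gt0.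
by apply: integral_ge0 => t /in_itv_ge0 t0; rewrite lee_fin integrand_ge0.
Qed.

Hypothesis x_small : forall k, x k ^+ 2 <= rayleigh_scale k.

(* The weights [expR (lambda_ratio k * t)] cancel against the exponential in
   front, leaving the exponential density of mean 1. *)
Lemma jpdf_le : (jpdf sigma lambda x <= (jpdf_prefactor * \prod_(k < M) x k)%:E)%E.
Proof.
rewrite jpdfE EFinM; apply: lee_wpmul2l; first by rewrite lee_fin ltW ?jpdf_prefactor_gt0.
have px0 : 0 <= \prod_(k < M) x k by apply: prodr_ge0.
apply: (@le_trans _ _ (\int[mu]_(t in `[0%R, +oo[%classic)
            ((\prod_(k < M) x k) * exponential_pdf 1 t)%:E)%E).
  apply: le_ge0_integral => t /in_itv_ge0 t0; rewrite lee_fin ?integrand_ge0 //.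
  rewrite exponential_pdfE // mul1r mulN1r.
  apply: (@le_trans _ _ (expR (- ((1 + \sum_(k < M) lambda_ratio k) * t)) *
      \prod_(k < M) (x k * expR (lambda_ratio k * t)))).
    apply/ler_wpM2l/ler_prod => [|k _]; first exact: expR_ge0.
    have /andP[lo up] := factor_bounds (x_ge0 k) (x_small k) t0.
    by rewrite up (le_trans _ lo) // mulr_ge0 ?expR_ge0.
  rewrite big_split /= -expR_sum -mulr_suml mulrCA -expRD.
  by rewrite mulrDl mul1r opprD addrNK.
under eq_integral do rewrite EFinM.
rewrite ge0_integralZl_EFin //; last 2 first.
- by move=> t _; rewrite lee_fin exponential_pdf_ge0.
- apply/measurable_realfun.measurable_EFinP; apply: measurable_funTS.
  exact: measurable_exponential_pdf.
rewrite -[X in (_ <= X)%E]mule1; apply: lee_wpmul2l; first by rewrite lee_fin.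
rewrite -(integral_exponential_pdf (ltr01 : (0 : R) < 1)).
apply: ge0_subset_integral => //.
- apply/measurable_realfun.measurable_EFinP; exact: measurable_exponential_pdf.
- by move=> t _; rewrite lee_fin exponential_pdf_ge0.
Qed.

(* Restrict the [t]-integral to [0, 1], where the exponential weight is at least
   its value at [t = 1]. *)
Lemma jpdf_ge : ((jpdf_floor * \prod_(k < M) x k)%:E <= jpdf sigma lambda x)%E.
Proof.
rewrite jpdfE /jpdf_floor -mulrA EFinM; apply: lee_wpmul2l.
  by rewrite lee_fin ltW ?jpdf_prefactor_gt0.
set c := _ * \prod_(k < M) x k.
have c0 : 0 <= c by rewrite !mulr_ge0 ?exprn_ge0 ?expR_ge0 ?prodr_ge0.
rewrite -[c]mulr1 -[X in (c * X)]subr0 -integral_indic_itv ?ler01 ?lexx //.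
apply: le_ge0_integral => t /in_itv_ge0 t0.
  by rewrite lee_fin mulr_ge0 // indic_ge0.
rewrite lee_fin indicE; case: (boolP (t \in _)) => [|_]; last first.
  by rewrite mulr0 integrand_ge0.
rewrite inE /= in_itv /= => /andP[_ t1].
rewrite mulr1 /c /integrand -mulrA; apply: ler_pM.
- exact: expR_ge0.
- by rewrite mulr_ge0 ?exprn_ge0 ?expR_ge0 ?prodr_ge0.
- rewrite ler_expR lerN2 ler_piMr // addr_ge0 ?ler01 //.
  by apply: sumr_ge0 => k _; exact: lambda_ratio_ge0.
have -> : expR (-1) ^+ M = \prod_(k < M) expR (-1) :> R by rewrite prodr_const card_ord.
rewrite mulrC -big_split /=.
apply: ler_prod => k _; rewrite mulr_ge0 ?expR_ge0 //=.
by have /andP[] := factor_bounds (x_ge0 k) (x_small k) t0.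
Qed.

End density_bounds.
End joint_pdf.

Section outage.
Variable R : realType.
Variables (M : nat) (sigma lambda : 'I_M -> R) (Rate : R).
Hypothesis M_gt0 : (0 < M)%N.
Hypothesis sigma_gt0 : forall k, 0 < sigma k.
Hypothesis lambda_lt1 : forall k, `|lambda k| < 1.
Hypothesis Rate_gt0 : 0 < Rate.

Local Notation rayleigh_scale := (rayleigh_scale sigma lambda).
Local Notation jpdf_prefactor := (jpdf_prefactor sigma lambda).
Local Notation jpdf_floor := (jpdf_floor sigma lambda).
Local Notation outage g x := (\sum_(l < M) log2 (1 + g * x l ^+ 2) < Rate).

(* A radius below every [rayleigh_scale k], avoiding a minimum over [k]. *)
Definition origin_radius := (1 + \sum_(k < M) (rayleigh_scale k)^-1)^-1.

(* [2 ^ Rate - 1]: a single branch reaching it already exhausts the rate. *)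
Definition outage_hi := expR (Rate * ln 2) - 1.

(* Small enough that [ln (1 + u) <= u] keeps the sum of rates below [Rate]. *)
Definition outage_lo := Rate * ln 2 / (2 * M%:R).

Lemma origin_radius_le k : origin_radius <= rayleigh_scale k.
Proof.
have inv_ge0 i : 0 <= (rayleigh_scale i)^-1 by rewrite invr_ge0 ltW ?rayleigh_scale_gt0.
have s_gt0 := rayleigh_scale_gt0 sigma_gt0 lambda_lt1 k.
rewrite -[X in _ <= X](invrK (rayleigh_scale k)).
rewrite lef_pV2 ?posrE ?invr_gt0 ?ltr_wpDr ?sumr_ge0 // (bigD1 k) //=.
have : 0 <= \sum_(i < M | i != k) (rayleigh_scale i)^-1 by exact: sumr_ge0.
lra.
Qed.

Lemma outage_hi_gt0 : 0 < outage_hi.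
Proof. by rewrite subr_gt0 expR_gt1 mulr_gt0 ?ln2_gt0. Qed.

Lemma outage_lo_gt0 : 0 < outage_lo.
Proof. by rewrite !divr_gt0 ?mulr_gt0 ?ln2_gt0 ?ltr0n. Qed.

Lemma outage_sqr_le g x : 0 < g -> outage g x -> forall k, x k ^+ 2 <= outage_hi / g.
Proof.
move=> g0 out k; have gx_ge0 l : 0 <= g * x l ^+ 2 by rewrite mulr_ge0 ?sqr_ge0 ?ltW.
have : log2 (1 + g * x k ^+ 2) < Rate.
  apply: le_lt_trans out; rewrite (bigD1 k) //= lerDl.
  by apply: sumr_ge0 => l _; exact: log2_1D_ge0.
have p0 : 0 < 1 + g * x k ^+ 2 by rewrite ltr_wpDr.
rewrite /log2 ltr_pdivrMr ?ln2_gt0 // -ltr_expR lnK // => lt_exp.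
by rewrite ler_pdivlMr // /outage_hi; lra.
Qed.

Lemma sqr_le_outage g x : 0 < g -> (forall k, x k ^+ 2 <= outage_lo / g) -> outage g x.
Proof.
move=> g0 x_le; have M_gt0' : 0 < M%:R :> R by rewrite ltr0n.
apply: (@le_lt_trans _ _ (\sum_(l < M) (outage_lo / ln 2))).
  apply: ler_sum => l _; rewrite /log2 ler_pM2r ?invr_gt0 ?ln2_gt0 //.
  have gx_ge0 : 0 <= g * x l ^+ 2 by rewrite mulr_ge0 ?sqr_ge0 ?ltW.
  apply: le_trans (le_ln1Dx _) _; first by apply: lt_le_trans gx_ge0; rewrite ltrN10.
  by move: (x_le l); rewrite ler_pdivlMr // mulrC.
rewrite sumr_const card_ord -[_ *+ M]mulr_natr /outage_lo.
have -> : Rate * ln 2 / (2 * M%:R) / ln 2 * M%:R = Rate / 2.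
  by field; rewrite !gt_eqF ?ln2_gt0.
by rewrite ltr_pdivrMr // ltr_pMr // ltr1n.
Qed.

Lemma Pout_le g : 0 < g -> outage_hi / g <= origin_radius ->
  (Pout sigma lambda Rate g <= (jpdf_prefactor * (outage_hi / g) ^+ M)%:E)%E.
Proof.
move=> g0 small.
have ag0 : 0 <= outage_hi / g by rewrite divr_ge0 ?ltW ?outage_hi_gt0.
set B := Num.sqrt (outage_hi / g); have B0 : 0 <= B := sqrtr_ge0 _.
have B2 : B ^+ 2 = outage_hi / g := sqr_sqrtr ag0.
have P0 : 0 <= jpdf_prefactor by rewrite ltW ?jpdf_prefactor_gt0.
rewrite -B2 expr2 -[X in B * X]subr0.
rewrite -(@iint_pos_cube _ M B 0 B _ B0 _ P0) ?lexx //.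
apply: iint_pos_le => x x_ge0; first by case: ifP => _ //; exact: jpdf_ge0.
case: ifP => [out|_]; last first.
  by rewrite lee_fin mulr_ge0 // prodr_ge0 // => k _; rewrite mulr_ge0 ?indic_ge0.
have x_le := outage_sqr_le g0 out.
have x_small k : x k ^+ 2 <= rayleigh_scale k.
  by rewrite (le_trans (x_le k)) // (le_trans small) ?origin_radius_le.
apply: le_trans (jpdf_le sigma_gt0 lambda_lt1 x_ge0 x_small) _.
rewrite lee_fin ler_wpM2l //; apply: ler_prod => k _; rewrite x_ge0 /=.
have xB : x k <= B by move: (x_le k); rewrite -B2 => ?; have := x_ge0 k; nra.
by rewrite indicE mem_set ?mulr1 // /= in_itv /= x_ge0 xB.
Qed.

Lemma Pout_ge g : 0 < g -> outage_lo / g <= origin_radius ->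
  ((jpdf_floor * (outage_lo / g / 4) ^+ M)%:E <= Pout sigma lambda Rate g)%E.
Proof.
move=> g0 small.
have eg0 : 0 <= outage_lo / g by rewrite divr_ge0 ?ltW ?outage_lo_gt0.
set b := Num.sqrt (outage_lo / g); have b0 : 0 <= b := sqrtr_ge0 _.
have b2 : b ^+ 2 = outage_lo / g := sqr_sqrtr eg0.
have K0 : 0 <= jpdf_floor by rewrite ltW ?jpdf_floor_gt0.
have hb0 : 0 <= b / 2 by rewrite divr_ge0.
have hb : 0 <= b / 2 <= b by rewrite hb0 /=; lra.
have -> : outage_lo / g / 4 = b / 2 * (b - b / 2) by rewrite -b2; field.
rewrite -(@iint_pos_cube _ M (b / 2) (b / 2) b _ hb0 hb K0).
apply: iint_pos_le => x x_ge0.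
  by rewrite lee_fin mulr_ge0 // prodr_ge0 // => k _; rewrite mulr_ge0 ?indic_ge0.
have [/forallP x_in | /forallPn [k x_out]] :=
  boolP [forall k, x k \in (`[b / 2, b]%classic : set R)]; last first.
  rewrite (bigD1 k) //= indicE (negbTE x_out) mulr0 mul0r mulr0.
  by case: ifP => _ //; exact: jpdf_ge0.
have x_le k : x k ^+ 2 <= outage_lo / g.
  have := set_mem (x_in k); rewrite /= in_itv /= -b2 => /andP[_ ?].
  by have := x_ge0 k; nra.
have x_small k : x k ^+ 2 <= rayleigh_scale k.
  by rewrite (le_trans (x_le k)) // (le_trans small) ?origin_radius_le.
rewrite (sqr_le_outage g0 x_le).
apply: le_trans (jpdf_ge sigma_gt0 lambda_lt1 x_ge0 x_small).
rewrite lee_fin ler_wpM2l //; apply: ler_prod => k _.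
rewrite indicE (x_in k) mulr1 hb0 /=.
by have := set_mem (x_in k); rewrite /= in_itv /= => /andP[].
Qed.

Lemma ln_Pout_near :
  \forall g \near +oo,
    ln (jpdf_floor * (outage_lo / 4) ^+ M) - M%:R * ln g
      <= ln (fine (Pout sigma lambda Rate g))
      <= ln (jpdf_prefactor * outage_hi ^+ M) - M%:R * ln g.
Proof.
have r_gt0 : 0 < origin_radius.
  rewrite invr_gt0 ltr_wpDr // sumr_ge0 // => k _.
  by rewrite invr_ge0 ltW ?rayleigh_scale_gt0.
have small_near c : \forall g \near +oo, c / g <= origin_radius.
  near=> g; rewrite ler_pdivrMr; last by near: g; exact: nbhs_pinfty_gt (num_real _).
  by rewrite mulrC -ler_pdivrMr //; near: g; exact: nbhs_pinfty_ge (num_real _).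
have floor_gt0 := jpdf_floor_gt0 sigma_gt0 lambda_lt1.
have prefactor_gt0 := jpdf_prefactor_gt0 sigma_gt0 lambda_lt1.
have lo_gt0 := outage_lo_gt0; have hi_gt0 := outage_hi_gt0.
near=> g; have g0 : 0 < g by near: g; exact: nbhs_pinfty_gt (num_real _).
have small_hi : outage_hi / g <= origin_radius by near: g; exact: small_near.
have small_lo : outage_lo / g <= origin_radius by near: g; exact: small_near.
have := Pout_le g0 small_hi; have := Pout_ge g0 small_lo.
case: (Pout sigma lambda Rate g) => [p| |] //=; rewrite !lee_fin => p_ge p_le.
have lower_gt0 : 0 < jpdf_floor * (outage_lo / g / 4) ^+ M.
  by rewrite (mulr_gt0 floor_gt0) // exprn_gt0 // divr_gt0 // divr_gt0.
have lo4_gt0 : 0 < outage_lo / 4 by rewrite divr_gt0.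
rewrite -(ln_mul_divX M) // -(ln_mul_divX M) //.
have p_gt0 : 0 < p := lt_le_trans lower_gt0 p_ge.
have upper_gt0 := lt_le_trans p_gt0 p_le.
by rewrite [outage_lo / 4 / g]mulrAC !ler_ln ?posrE // p_ge p_le.
Unshelve. all: by end_near.
Qed.

End outage.

Theorem mainTheorem12 (R : realType) (M : nat) (sigma lambda : 'I_M -> R)
  (Rate : R) :
  (1 <= M)%N ->
  (forall k, 0 < sigma k) ->
  (forall k, `|lambda k| < 1) ->
  0 < Rate ->
  (fun gammaT : R => ln (fine (Pout sigma lambda Rate gammaT)) / ln gammaT)
    @ +oo --> - (M%:R : R).
Proof.
move=> M_gt0 sigma_gt0 lambda_lt1 Rate_gt0.
exact: cvg_div_ln (ln_Pout_near M_gt0 sigma_gt0 lambda_lt1 Rate_gt0).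
Qed.
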